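(* Let $P\subset\mathbb{R}^d$ be a finite dataset with $|P|=n$, let $s$ be the number of compute nodes, $t<s$, $\delta>0$, and let $A\in\{0,1\}^{s\times n}$ (columns indexed by the points of $P$) satisfy the straggler-resilience property with parameter $\delta$. For $i\in[s]$ let $P_i$ be the set of points of $P$ whose column has a $1$ in row $i$. Let $\mathcal{R}\subseteq[s]$ with $|\mathcal{R}|\ge s-t$ and let $\mathbf{b}=(b_i)_{i\in\mathcal{R}}$ be a corresponding non-negative recovery vector. Let $0<\epsilon<1/3$ and for each $i\in\mathcal{R}$ let $(S_i,w_i)$ be an $\epsilon$-coreset for $P_i$ with respect to a cost function $\mathrm{cost}$ of the form described in the context. Let $S$ be the disjoint union of the $S_i$, $i\in\mathcal{R}$, with weight $w(\mathbf{c})=b_i\,w_i(\mathbf{c})$ for $\mathbf{c}\in S_i$. Then $(S,w)$ is a $2(\epsilon+\delta)$-coreset for $P$, i.e., for every admissible center set $C$, $$(1-2(\epsilon+\delta))\,\mathrm{cost}(P,C)\le\mathrm{cost}(S,C,w)\le(1+2(\epsilon+\delta))\,\mathrm{cost}(P,C).$$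
   Context: The cost function is additive: there is a non-negative function $D(\mathbf{x},C)$ (e.g. $D(\mathbf{x},C)=\min_{\mathbf{c}\in C}\|\mathbf{x}-\mathbf{c}\|_2$ for $k$-median, its square for $k$-means, or the squared distance to the nearest of $k$ $r$-dimensional subspaces for $(r,k)$-subspace clustering) such that for a finite set $Q$ with weights $w$, $\mathrm{cost}(Q,C,w)=\sum_{\mathbf{q}\in Q}w(\mathbf{q})D(\mathbf{q},C)$, and $\mathrm{cost}(Q,C)$ is this with all weights $1$. An $\epsilon$-coreset ($0<\epsilon<1/3$) for a dataset $Q$ is a weighted set $(S',w')$ such that for every center set $C$, $(1-\epsilon)\mathrm{cost}(Q,C)\le\mathrm{cost}(S',C,w')\le(1+\epsilon)\mathrm{cost}(Q,C)$. Straggler-resilience property with parameter $\delta$: for every $\mathcal{R}\subseteq[s]$ with $|\mathcal{R}|\ge s-t$, letting $A_{\mathcal{R}}$ be the rows of $A$ indexed by $\mathcal{R}$, there is $\mathbf{b}\in\mathbb{R}^{|\mathcal{R}|}$ with non-negative entries (a recovery vector) such that $\mathbf{b}^TA_{\mathcal{R}}=(a_1,\ldots,a_n)$ with $1\le a_j\le 1+\delta$ for all $j$. *)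

From mathcomp Require Import all_boot all_order all_algebra.
Set Implicit Arguments. Unset Strict Implicit. Unset Printing Implicit Defensive.
Import Order.TTheory GRing.Theory Num.Theory.
Local Open Scope ring_scope.

Section Coresets.
Variables (R : realFieldType) (V CT : Type) (D : V -> CT -> R).

Definition cost (Q : seq V) (C : CT) : R := \sum_(q <- Q) D q C.

Definition wcost (S : seq (V * R)) (C : CT) : R := \sum_(q <- S) q.2 * D q.1 C.

Definition wset (S : seq V) (w : V -> R) : seq (V * R) := [seq (c, w c) | c <- S].

Definition is_coreset (eps : R) (Q : seq V) (S : seq (V * R)) : Prop :=
  forall C : CT,
    (1 - eps) * cost Q C <= wcost S C /\ wcost S C <= (1 + eps) * cost Q C.
End Coresets.

Definition recovery_vector (R : realFieldType) (s n : nat) (A : 'M[R]_(s, n))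
    (delta : R) (Rs : {set 'I_s}) (b : 'I_s -> R) : Prop :=
  (forall i, i \in Rs -> 0 <= b i) /\
  (forall j : 'I_n, 1 <= \sum_(i in Rs) b i * A i j <= 1 + delta).

Definition straggler_resilient (R : realFieldType) (s n t : nat)
    (A : 'M[R]_(s, n)) (delta : R) : Prop :=
  forall Rs : {set 'I_s}, (s - t <= #|Rs|)%N -> exists b, recovery_vector A delta Rs b.

Definition Pi (R : realFieldType) (d s n : nat) (A : 'M[R]_(s, n))
    (p : 'I_n -> 'rV[R]_d) (i : 'I_s) : seq 'rV[R]_d :=
  [seq p j | j <- enum 'I_n & A i j == 1].

Definition disj_union (R : realFieldType) (V : Type) (s : nat) (Rs : {set 'I_s})
    (S : 'I_s -> seq V) (w : 'I_s -> V -> R) (b : 'I_s -> R) : seq (V * R) :=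
  flatten [seq [seq (c, b i * w i c) | c <- S i] | i <- enum Rs].

From mathcomp Require Import all_boot all_order all_algebra.
From mathcomp Require Import lra.
Set Implicit Arguments. Unset Strict Implicit. Unset Printing Implicit Defensive.
Import Order.TTheory GRing.Theory Num.Theory.
Local Open Scope ring_scope.

(* The recovery vector reweights the parts P_i so that every point of P is
   counted between 1 and 1 + delta times, hence
   cost(P) <= sum_i b_i cost(P_i) <= (1 + delta) cost(P).  Summing the coreset
   guarantees for the P_i with the non-negative weights b_i approximates the
   middle term within a factor 1 +- eps, and (1 + eps)(1 + delta) <= 1 + 2(eps + delta). *)

Section WeightedCoresets.
Variables (R : realFieldType) (V CT : Type) (D : V -> CT -> R).

Lemma wcost_disj_union (s : nat) (Rs : {set 'I_s}) (S : 'I_s -> seq V)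
    (w : 'I_s -> V -> R) (b : 'I_s -> R) (C : CT) :
  wcost D (disj_union Rs S w b) C =
  \sum_(i in Rs) b i * wcost D (wset (S i) (w i)) C.
Proof.
rewrite /wcost /disj_union big_flatten /= big_map big_enum /=.
apply: eq_bigr => i _; rewrite /wset !big_map mulr_sumr.
by apply: eq_bigr => c _ /=; rewrite mulrA.
Qed.

Lemma coreset_nonneg_combination (I : finType) (P : {pred I}) (eps : R)
    (c : I -> R) (Q : I -> seq V) (S : I -> seq (V * R)) (C : CT) :
  (forall i, i \in P -> 0 <= c i) ->
  (forall i, i \in P -> is_coreset D eps (Q i) (S i)) ->
  (1 - eps) * \sum_(i in P) c i * cost D (Q i) C
    <= \sum_(i in P) c i * wcost D (S i) C
  /\ \sum_(i in P) c i * wcost D (S i) C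
    <= (1 + eps) * \sum_(i in P) c i * cost D (Q i) C.
Proof.
move=> c_ge0 coreS; rewrite !mulr_sumr; split; apply: ler_sum => i Pi;
  rewrite mulrCA ler_wpM2l ?c_ge0 //; by case: (coreS i Pi C).
Qed.

End WeightedCoresets.

Lemma approx_compose (R : realFieldType) (eps delta x y z : R) :
  0 <= eps <= 1 -> 0 <= delta -> 0 <= x ->
  x <= y <= (1 + delta) * x ->
  (1 - eps) * y <= z <= (1 + eps) * y ->
  (1 - 2 * (eps + delta)) * x <= z <= (1 + 2 * (eps + delta)) * x.
Proof.
case/andP=> ? ? ? ? /andP[? ?] /andP[? ?]; apply/andP; split; nra.
Qed.

Section RecoveryCost.
Variables (R : realFieldType) (d s n : nat) (CT : Type).
Variables (D : 'rV[R]_d -> CT -> R) (p : 'I_n -> 'rV[R]_d) (A : 'M[R]_(s, n)).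
Hypothesis A01 : forall i j, A i j = 0 \/ A i j = 1.

Lemma cost_Pi (i : 'I_s) (C : CT) :
  cost D (Pi A p i) C = \sum_j A i j * D (p j) C.
Proof.
rewrite /cost /Pi big_map big_filter big_mkcond big_enum /=.
apply: eq_bigr => j _; case: (A01 i j) => ->; rewrite ?eqxx ?mul1r //.
by rewrite mul0r eq_sym (negbTE (oner_neq0 R)).
Qed.

Lemma recovery_cost_bounds (delta : R) (Rs : {set 'I_s}) (b : 'I_s -> R) (C : CT) :
  (forall x, 0 <= D x C) -> recovery_vector A delta Rs b ->
  cost D [seq p j | j <- enum 'I_n] C
    <= \sum_(i in Rs) b i * cost D (Pi A p i) C
    <= (1 + delta) * cost D [seq p j | j <- enum 'I_n] C.
Proof.
move=> D_ge0 [_ bA].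
have costP : cost D [seq p j | j <- enum 'I_n] C = \sum_j D (p j) C by rewrite /cost big_map big_enum.
have -> : \sum_(i in Rs) b i * cost D (Pi A p i) C =
          \sum_j (\sum_(i in Rs) b i * A i j) * D (p j) C.
  under eq_bigr => i _ do rewrite cost_Pi mulr_sumr.
  rewrite exchange_big /=; apply: eq_bigr => j _; rewrite mulr_suml.
  by apply: eq_bigr => i _; rewrite mulrA.
rewrite costP mulr_sumr; apply/andP; split; apply: ler_sum => j _;
  case/andP: (bA j) => ? ?.
- by rewrite -{1}(mul1r (D _ _)) ler_wpM2r.
- by rewrite ler_wpM2r.
Qed.

End RecoveryCost.

Theorem lemma3 (R : realFieldType) (d n s t : nat)
    (CT : Type) (D : 'rV[R]_d -> CT -> R) (D_ge0 : forall x C, 0 <= D x C)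
    (p : 'I_n -> 'rV[R]_d) (p_inj : injective p)
    (delta eps : R) (A : 'M[R]_(s, n))
    (S : 'I_s -> seq 'rV[R]_d) (w : 'I_s -> 'rV[R]_d -> R)
    (Rs : {set 'I_s}) (b : 'I_s -> R) :
  (t < s)%N -> 0 < delta ->
  (forall i j, A i j = 0 \/ A i j = 1) ->
  straggler_resilient t A delta ->
  (s - t <= #|Rs|)%N ->
  recovery_vector A delta Rs b ->
  0 < eps -> eps < 1 / 3 ->
  (forall i, i \in Rs -> uniq (S i) /\
     is_coreset D eps (Pi A p i) (wset (S i) (w i))) ->
  is_coreset D (2 * (eps + delta)) [seq p j | j <- enum 'I_n]
    (disj_union Rs S w b).
Proof.
move=> _ delta_gt0 A01 _ _ bRs eps_gt0 eps_lt13 coreS C.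
have [b_ge0 _] := bRs.
have eps01 : 0 <= eps <= 1 by apply/andP; split; lra.
have costP_ge0 : 0 <= cost D [seq p j | j <- enum 'I_n] C by exact: sumr_ge0.
have [lowS upS] := coreset_nonneg_combination C b_ge0
  (fun i iRs => (coreS i iRs).2).
rewrite -wcost_disj_union in lowS upS.
apply/andP/(approx_compose eps01 (ltW delta_gt0) costP_ge0).
  exact: recovery_cost_bounds (D_ge0^~ C) bRs.
by rewrite lowS upS.
Qed.
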